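(* Let $k \geq 3$ and let $A$ be a finite abelian group with at least $k$ elements. Fix a distinct difference system $S_1,\ldots,S_l$ in $A$. Call a subset of $A$ a basis if it has $k$ elements and is not a translate of a subset of some $S_i$ (i.e. it is not of the form $\{s+a : s \in T\}$ for some $a \in A$ and some $T \subseteq S_i$). Then these bases define a simple rank $k$ $A$-invariant matroid structure on $A$.
   Context: For an abelian group $A$, subsets $S_1,\ldots,S_l \subseteq A$ form a distinct difference system if: (i) for any $i,j$ and any $x,y \in S_i$, $z,w \in S_j$ with $x \neq y$ and $z \neq w$, the equation $x-y=z-w$ implies $x=z$ and $y=w$; (ii) each $S_i$ contains $0$ and at least one other element; (iii) $S_i \cap S_j = \{0\}$ for $i \neq j$. $A$ acts on itself by translation, and a matroid on $A$ is $A$-invariant if translates of bases are bases. A matroid is simple if every circuit has at least three elements. *)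

From HB Require Import structures.
From mathcomp Require Import all_boot all_order all_algebra.
Set Implicit Arguments. Unset Strict Implicit. Unset Printing Implicit Defensive.
Import GRing.Theory.
Local Open Scope ring_scope.

Definition distinct_difference_system (A : finZmodType) (l : nat)
    (S : 'I_l -> {set A}) : Prop :=
  [/\ (forall (i j : 'I_l) (x y z w : A),
         x \in S i -> y \in S i -> z \in S j -> w \in S j ->
         x != y -> z != w -> x - y = z - w -> x = z /\ y = w),
      (forall i : 'I_l, 0 \in S i /\ exists2 s, s \in S i & s != 0)
    & (forall i j : 'I_l, i != j -> S i :&: S j = [set 0])].

Definition translate (A : finZmodType) (T : {set A}) (a : A) : {set A} :=
  [set s + a | s in T].

Definition dds_bases (A : finZmodType) (l : nat) (S : 'I_l -> {set A}) (k : nat)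
  : {set {set A}} :=
  [set X : {set A} | (#|X| == k) &&
     ~~ [exists i : 'I_l, exists a : A, exists T : {set A},
           (T \subset S i) && (X == translate T a)]].

Definition matroid_bases (T : finType) (B : {set {set T}}) : Prop :=
  B != set0 /\
  forall B1 B2, B1 \in B -> B2 \in B -> forall x, x \in B1 :\: B2 ->
    exists2 y, y \in B2 :\: B1 & (B1 :\ x) :|: [set y] \in B.

Definition indep (T : finType) (B : {set {set T}}) (X : {set T}) : Prop :=
  exists2 Y, Y \in B & X \subset Y.

Definition circuit (T : finType) (B : {set {set T}}) (C : {set T}) : Prop :=
  ~ indep B C /\ forall D : {set T}, D \proper C -> indep B D.

Definition simple_matroid (T : finType) (B : {set {set T}}) : Prop :=
  forall C, circuit B C -> (3 <= #|C|)%N.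

Definition matroid_rank_is (T : finType) (B : {set {set T}}) (k : nat) : Prop :=
  forall X, X \in B -> #|X| = k.

Definition translation_invariant (A : finZmodType) (B : {set {set A}}) : Prop :=
  forall X (a : A), X \in B -> translate X a \in B.

From HB Require Import structures.
From mathcomp Require Import all_boot all_order all_algebra zify.

(* Call the translates [S_i + a] blocks. The distinct difference property
   implies that two distinct points lie in at most one block and that no block
   is all of [A]. Hence a set [Y] of at least two points lies in at most one
   block, and a point off that block can be added to [Y] without landing in a
   block. As [k >= 3], removing a point from a basis leaves at least two, which
   gives both basis exchange and the extension of every set of fewer than [k]
   points to a basis; the latter makes every pair independent, i.e. the matroid
   simple. *)

Set Implicit Arguments. Unset Strict Implicit. Unset Printing Implicit Defensive.
Import GRing.Theory.

Section Translate.
Variable A : finZmodType.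
Local Open Scope ring_scope.

Lemma mem_translate (T : {set A}) a x : (x \in translate T a) = (x - a \in T).
Proof.
apply/imsetP/idP => [[s Ts ->]|Txa]; first by rewrite addrK.
by exists (x - a); rewrite ?subrK.
Qed.

Lemma translateS (T T' : {set A}) a :
  T \subset T' -> translate T a \subset translate T' a.
Proof. exact: imsetS. Qed.

Lemma translate0 (T : {set A}) : translate T 0 = T.
Proof. by apply/setP => x; rewrite mem_translate subr0. Qed.

Lemma translateD (T : {set A}) a b :
  translate (translate T a) b = translate T (a + b).
Proof. by apply/setP => x; rewrite !mem_translate opprD addrA addrAC. Qed.

Lemma card_translate (T : {set A}) a : #|translate T a| = #|T|.
Proof. exact/card_imset/addIr. Qed.

Lemma translate_of_subsetE (T X : {set A}) a :
  [exists T' : {set A}, (T' \subset T) && (X == translate T' a)]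
  = (X \subset translate T a).
Proof.
apply/existsP/idP => [[T' /andP[sT'T /eqP ->]]|sXT]; first exact: translateS.
exists (translate X (- a)).
by rewrite translateD addNr translate0 eqxx andbT -(translate0 T) -(subrr a)
           -translateD translateS.
Qed.

End Translate.

Lemma exists_superset_card (T : finType) (Z : {set T}) n :
  (#|Z| <= n <= #|T|)%N -> exists2 X : {set T}, Z \subset X & #|X| = n.
Proof.
elim: n => [|n IHn] /andP[leZn lenT].
  by exists Z => //; apply/eqP; rewrite -leqn0.
move: leZn; rewrite leq_eqVlt => /predU1P[<-|ltZn]; first by exists Z.
have [|X sZX cardX] := IHn; first by rewrite -ltnS ltZn ltnW.
have [w Xw] : exists w, w \in ~: X.
  apply/card_gt0P; move: lenT; rewrite -(cardsC X) cardX.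
  by rewrite -[X in (X < _)%N]addn0 ltn_add2l.
exists (w |: X); first exact: subset_trans sZX (subsetUr _ _).
by rewrite cardsU1 -in_setC Xw cardX.
Qed.

Lemma circuit_card_geq (T : finType) (B : {set {set T}}) k (C : {set T}) :
  (forall Z : {set T}, (#|Z| < k)%N -> indep B Z) ->
  circuit B C -> (k <= #|C|)%N.
Proof.
move=> small_indep [dep_C _]; rewrite leqNgt.
exact: contra_notN (small_indep C) dep_C.
Qed.

Section DistinctDifferenceSystem.
Variables (A : finZmodType) (l : nat) (S : 'I_l -> {set A}).
Local Open Scope ring_scope.
Local Notation block i a := (translate (S i) a).

Lemma dds_basesE k X : (X \in dds_bases S k) =
  (#|X| == k) && ~~ [exists i, exists a, X \subset block i a].
Proof.
rewrite inE; congr (_ && ~~ _); apply/eq_existsb => i; apply/eq_existsb => a.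
exact: translate_of_subsetE.
Qed.

Lemma card_dds_bases k : matroid_rank_is (dds_bases S k) k.
Proof. by move=> X; rewrite dds_basesE => /andP[/eqP]. Qed.

Lemma dds_bases_translate k : translation_invariant (dds_bases S k).
Proof.
move=> X a; rewrite !dds_basesE card_translate => /andP[-> not_in_block] /=.
apply: contra not_in_block => /existsP[i /existsP[b sXa]].
apply/existsP; exists i; apply/existsP; exists (b - a).
by have := translateS (- a) sXa; rewrite !translateD subrr translate0.
Qed.

Lemma dds_basis_subset_blockF k X i a :
  X \in dds_bases S k -> (X \subset block i a) = false.
Proof.
rewrite dds_basesE => /andP[_]; apply: contraNF => sXb.
by apply/existsP; exists i; apply/existsP; exists a.
Qed.

Lemma dds_bases_setU1 k (Y : {set A}) y :
  (0 < k)%N -> #|Y| = k.-1 -> y \notin Y ->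
  (forall i a, Y \subset block i a -> y \notin block i a) ->
  y |: Y \in dds_bases S k.
Proof.
move=> k_gt0 cardY Yy y_off.
rewrite dds_basesE cardsU1 Yy cardY add1n prednK // eqxx /=.
apply/existsP => -[i /existsP[a]]; rewrite subUset sub1set => /andP[y_in sYb].
by rewrite (negPf (y_off i a sYb)) in y_in.
Qed.

Hypothesis dds : distinct_difference_system S.

Lemma block_neqT i a : block i a != setT.
Proof.
have [dd_eq S_pointed _] := dds; have [Si0 [g Sig g_neq0]] := S_pointed i.
apply/eqP => blockT.
have S_full x : x \in S i by rewrite -[x](addrK a) -mem_translate blockT inE.
have gg_neq_g : g + g != g by rewrite -subr_eq0 addrK.
have g_diff : g - 0 = (g + g) - g by rewrite subr0 addrK.
have [/esym g_eq _] :=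
  dd_eq _ _ _ _ _ _ Sig Si0 (S_full _) Sig g_neq0 gg_neq_g g_diff.
by rewrite g_eq eqxx in gg_neq_g.
Qed.

Lemma block_uniq u v i j a b : u != v ->
  u \in block i a -> v \in block i a -> u \in block j b -> v \in block j b ->
  i = j /\ a = b.
Proof.
have [dd_eq _ dd_cap] := dds.
move=> neq_uv; rewrite !mem_translate => Siu Siv Sju Sjv.
have neq_shift c : u - c != v - c by rewrite (can_eq (subrK c)).
have diff_shift c : (u - c) - (v - c) = u - v by rewrite opprB addrA subrK.
have [eq_u eq_v] := dd_eq _ _ _ _ _ _ Siu Siv Sju Sjv
  (neq_shift a) (neq_shift b) (etrans (diff_shift a) (esym (diff_shift b))).
split; last by apply: oppr_inj; apply: (addrI u).
apply/eqP; apply: contraT => neq_ij.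
have cap0 x : x \in S i -> x \in S j -> x = 0.
  by move=> Six Sjx; apply/set1P; rewrite -(dd_cap i j neq_ij) inE Six Sjx.
have := neq_shift a.
by rewrite (cap0 _ Siu) ?eq_u // (cap0 _ Siv) ?eq_v // eqxx.
Qed.

Lemma block_uniq_subset (Y : {set A}) i j a b : (1 < #|Y|)%N ->
  Y \subset block i a -> Y \subset block j b -> i = j /\ a = b.
Proof.
move=> /card_gt1P[u [v [Yu Yv neq_uv]]] /subsetP sYa /subsetP sYb.
exact: block_uniq neq_uv (sYa u Yu) (sYa v Yv) (sYb u Yu) (sYb v Yv).
Qed.

Lemma exists_off_blocks (Y W : {set A}) : (1 < #|Y|)%N -> W != set0 ->
  (forall i a, Y \subset block i a -> ~~ (W \subset block i a)) ->
  exists2 y, y \in W & forall i a, Y \subset block i a -> y \notin block i a.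
Proof.
move=> Y_gt1 /set0Pn[w Ww] W_off.
have [[i a] /= sYb|no_block] :=
  pickP [pred ia : 'I_l * A | Y \subset block ia.1 ia.2].
  have /subsetPn[y Wy y_off] := W_off i a sYb.
  by exists y => // j b sYb'; have [<- <-] := block_uniq_subset Y_gt1 sYb sYb'.
by exists w => // i a; have := no_block (i, a); rewrite /= => ->.
Qed.

Variable k : nat.
Hypothesis k_ge3 : (3 <= k)%N.

Lemma dds_bases_indep (Z : {set A}) :
  (k <= #|A|)%N -> (#|Z| < k)%N -> indep (dds_bases S k) Z.
Proof.
move=> k_leA Z_small.
have [|Y sZY cardY] := @exists_superset_card _ Z k.-1.
  by apply/andP; split; [lia | exact: leq_trans (leq_pred k) k_leA].
have Y_gt1 : (1 < #|Y|)%N by lia.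
have CY_neq0 : ~: Y != set0.
  rewrite -card_gt0 -(ltn_add2l #|Y|) addn0 cardsC cardY.
  by apply: (leq_trans _ k_leA); lia.
have CY_off i a : Y \subset block i a -> ~~ (~: Y \subset block i a).
  move=> sYb; apply: contra (block_neqT i a) => sCYb.
  by rewrite -subTset -(setUCr Y) subUset sYb.
have [y CYy y_off] := exists_off_blocks Y_gt1 CY_neq0 CY_off.
exists (y |: Y); last exact: subset_trans sZY (subsetUr _ _).
by apply: dds_bases_setU1; rewrite -?in_setC //; lia.
Qed.

Lemma dds_bases_exchange B1 B2 x :
  B1 \in dds_bases S k -> B2 \in dds_bases S k -> x \in B1 :\: B2 ->
  exists2 y, y \in B2 :\: B1 & (B1 :\ x) :|: [set y] \in dds_bases S k.
Proof.
move=> B1b B2b; rewrite inE => /andP[B2x B1x].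
have cardB1 := card_dds_bases B1b; have cardB2 := card_dds_bases B2b.
set Y := B1 :\ x.
have cardY : #|Y| = k.-1.
  by move: cardB1; rewrite (cardsD1 x B1) B1x add1n => <-.
have Y_gt1 : (1 < #|Y|)%N by lia.
have W_neq0 : B2 :\: B1 != set0.
  rewrite setD_eq0; apply/negP => sB2B1.
  have eqB : B2 = B1 by apply/eqP; rewrite eqEcard sB2B1 cardB1 cardB2 leqnn.
  by rewrite eqB B1x in B2x.
have W_off i a : Y \subset block i a -> ~~ (B2 :\: B1 \subset block i a).
  move=> sYb; apply: contraFN (dds_basis_subset_blockF i a B2b) => sWb.
  apply/subsetP => w B2w; have [B1w|B1w] := boolP (w \in B1).
    apply: (subsetP sYb); rewrite !inE B1w andbT.
    by apply: contraNneq B2x => <-.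
  by apply: (subsetP sWb); rewrite inE B1w.
have [y Wy y_off] := exists_off_blocks Y_gt1 W_neq0 W_off.
exists y => //; rewrite setUC; apply: dds_bases_setU1 => //; first lia.
by move: Wy; rewrite !inE => /andP[/negPf-> _]; rewrite andbF.
Qed.

End DistinctDifferenceSystem.

Theorem theorem3p26 (k : nat) (A : finZmodType) (l : nat) (S : 'I_l -> {set A}) :
  3 <= k -> k <= #|A| -> distinct_difference_system S ->
  let B := dds_bases S k in
  [/\ matroid_bases B, matroid_rank_is B k, simple_matroid B
    & translation_invariant B].
Proof.
move=> k_ge3 k_leA dds B.
have indep_small (Z : {set A}) : (#|Z| < k)%N -> indep B Z :=
  dds_bases_indep dds k_ge3 k_leA.
split.
- split; last by move=> B1 B2 B1b B2b x; apply: dds_bases_exchange.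
  have [X BX _] : indep B set0 by apply: indep_small; rewrite cards0; lia.
  by apply/set0Pn; exists X.
- exact: card_dds_bases.
- move=> C; apply: circuit_card_geq => Z Z_small.
  exact/indep_small/(leq_trans Z_small).
- exact: dds_bases_translate.
Qed.
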